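(* Let $\mathcal L_n\subset\mathbb C[z_1,z_2,\theta_1,\theta_2]$ be the left ideal generated by $L_1$ and $L_2$. Then its restriction $\mathcal L_n|_{z_2=0}$ is the left ideal of $\mathbb C[z_1,\theta_1]$ generated by $$L:=\theta_1^2-a_0z_1(\theta_1+a_1)(\theta_1+a_2).$$
   Context: $\mathbb C[z_1,z_2,\theta_1,\theta_2]$ denotes the non-commutative ring with relations $\theta_iz_i=z_i(\theta_i+1)$ ($i=1,2$), all other pairs of generators commuting; $\theta_i$ is interpreted as $z_i\partial/\partial z_i$. For a left ideal $\mathcal I$ of this ring, its restriction to $z_2=0$ is $\mathcal I|_{z_2=0}=\{A\in\mathbb C[z_1,\theta_1]:\ \exists B_1,B_2\in\mathbb C[z_1,z_2,\theta_1,\theta_2],\ A+z_2B_1+\theta_2B_2\in\mathcal I\}$. Fix an integer $n\ge1$ and constants $a_0\neq0,a_1,a_2$, and $L_1=-n\theta_1\theta_2+\theta_1^2-a_0z_1(\theta_1+a_1)(\theta_1+a_2)$, $L_2=\theta_2^{n}-(-1)^n z_2\,(n\theta_2-\theta_1)(n\theta_2-\theta_1+1)\cdots(n\theta_2-\theta_1+n-1)$. *)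

From HB Require Import structures.
From mathcomp Require Import all_boot all_order all_algebra.
Set Implicit Arguments. Unset Strict Implicit. Unset Printing Implicit Defensive.
Import Order.TTheory GRing.Theory Num.Theory.
Local Open Scope ring_scope.

(* The ring C[z1,z2,theta1,theta2] with theta_i z_i = z_i (theta_i + 1) is
   represented by normal forms  sum_{a,b} z1^a z2^b p_{ab}(theta1,theta2)
   (z's on the left, theta's on the right).  As an additive group this is
   F[z1][z2] ⊗ F[theta1][theta2], encoded as nested polynomials:
     TP F := {poly {poly F}}   (outer variable theta1, inner theta2)
     W  F := {poly {poly TP F}} (outer variable z1, inner z2).
   Only the additive structure of these poly types is used; the
   non-commutative product is [wmul] below. *)
Definition TP (F : fieldType) := {poly {poly F}}.
Definition W (F : fieldType) := {poly {poly TP F}}.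

Section Weyl.
Variable F : fieldType.

Definition shiftT (c d : nat) (p : TP F) : TP F :=
  (map_poly (fun r : {poly F} => r \Po ('X + (d%:R)%:P)) p)
    \Po ('X + ((c%:R : {poly F}))%:P).

Definition wmono (a b : nat) (r : TP F) : W F := ('X^b * r%:P)%:P * 'X^a.

(* (z^alpha p(theta)) (z^gamma q(theta)) = z^(alpha+gamma) p(theta+gamma) q(theta) *)
Definition wmul (P Q : W F) : W F :=
  \sum_(a < size P) \sum_(b < size P`_a) \sum_(c < size Q) \sum_(d < size Q`_c)
     wmono (a + c) (b + d) (shiftT c d P`_a`_b * Q`_c`_d).

Definition wz1 : W F := 'X.
Definition wz2 : W F := ('X : {poly TP F})%:P.
Definition wth1 : W F := (('X : TP F)%:P)%:P.
Definition wth2 : W F := (((('X : {poly F})%:P) : TP F)%:P)%:P.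
Definition wcst (c : F) : W F := c%:P%:P%:P%:P.

End Weyl.

Arguments wz1 {F}. Arguments wz2 {F}. Arguments wth1 {F}. Arguments wth2 {F}.

Notation "x *w y" := (wmul x y) (at level 40, left associativity).

Definition L1 (F : fieldType) (n : nat) (a0 a1 a2 : F) : W F :=
  - (@wcst F n%:R *w wth1 *w wth2) + wth1 *w wth1
  - @wcst F a0 *w wz1 *w (wth1 + @wcst F a1) *w (wth1 + @wcst F a2).

Definition wexp (F : fieldType) (x : W F) (k : nat) : W F :=
  iter k (@wmul F x) (@wcst F 1).

Definition L2 (F : fieldType) (n : nat) : W F :=
  wexp wth2 n
  - @wcst F ((-1) ^+ n) *w wz2 *w
      \big[@wmul F/@wcst F 1]_(k < n)
         (@wcst F n%:R *w wth2 - wth1 + @wcst F (nat_of_ord k)%:R).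

Definition Lred (F : fieldType) (a0 a1 a2 : F) : W F :=
  wth1 *w wth1 - @wcst F a0 *w wz1 *w (wth1 + @wcst F a1) *w (wth1 + @wcst F a2).

(* C[z1,theta1] in normal form: {poly {poly F}} with outer variable z1 and
   inner variable theta1; [emb] is its inclusion into W. *)
Definition emb (F : fieldType) (A : {poly {poly F}}) : W F :=
  map_poly (fun p : {poly F} => ((map_poly polyC p : TP F))%:P) A.

Definition in_Ln (F : fieldType) (n : nat) (a0 a1 a2 : F) (P : W F) : Prop :=
  exists P1 P2 : W F, P = P1 *w L1 n a0 a1 a2 + P2 *w L2 F n.

Definition in_restr (F : fieldType) (n : nat) (a0 a1 a2 : F)
    (A : {poly {poly F}}) : Prop :=
  exists B1 B2 : W F, in_Ln n a0 a1 a2 (emb A + wz2 *w B1 + wth2 *w B2).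

Definition in_idealL (F : fieldType) (a0 a1 a2 : F) (A : {poly {poly F}}) : Prop :=
  exists Q : {poly {poly F}}, emb A = emb Q *w Lred a0 a1 a2.

From HB Require Import structures.
From mathcomp Require Import all_boot all_order all_algebra.
Import Order.TTheory GRing.Theory Num.Theory.
Local Open Scope ring_scope.

(* Setting z2 = 0 and θ2 = 0 -- keeping the z2-free part of a normal form and
   evaluating it at θ2 = 0 -- is multiplicative: in
   (z^α p(θ)) (z^γ q(θ)) = z^(α+γ) p(θ+γ) q(θ) the z2-degree only grows, and
   when γ2 = 0 the shift leaves θ2 alone.  This map fixes C[z1,θ1], kills z2
   and θ2, sends L1 to L and, since n >= 1, L2 to 0; applied to
   A + z2 B1 + θ2 B2 = P1 L1 + P2 L2 it yields A = P1(z1,θ1,0,0) L.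
   Conversely L1 = L - n θ1 θ2 and θ2 commutes with C[z1,θ1], so A = Q L gives
   A + θ2 (- n Q θ1) = Q L1. *)

Lemma eq_sum_ord_widen {V : nmodType} {n N : nat} (leNn : (n <= N)%N)
    (f : 'I_n -> V) (g : 'I_N -> V) :
  (forall k, f k = g (widen_ord leNn k)) -> (forall k : 'I_N, (n <= k)%N -> g k = 0) ->
  \sum_(k < n) f k = \sum_(k < N) g k.
Proof.
move=> fg g0; rewrite (eq_bigr _ (fun k _ => fg k)) -(big_ord_narrow leNn) big_mkcond /=.
by apply: eq_bigr => k _; case: ltnP => // /g0 ->.
Qed.

Lemma sum_ord_if_eq {V : nmodType} {N : nat} (g : nat -> V) (i : nat) :
  (forall k, (N <= k)%N -> g k = 0) ->
  \sum_(a < N) (if i == a then g a else 0) = g i.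
Proof.
move=> g0; rewrite -big_mkcond /=.
rewrite (eq_bigl (fun a : 'I_N => val a == i)) => [|a]; last by rewrite eq_sym.
by rewrite big_ord1_eq; case: ltnP => // /g0.
Qed.

Lemma sum_ord_if_eq2 {V : nmodType} {N M : nat} (f : nat -> nat -> V) (i j : nat) :
  (forall a b, (N <= a)%N || (M <= b)%N -> f a b = 0) ->
  \sum_(a < N) \sum_(b < M) (if (i == a) && (j == b) then f a b else 0) = f i j.
Proof.
move=> f0; rewrite -(@sum_ord_if_eq _ N (fun a => f a j) i) => [|a leNa]; last first.
  by rewrite f0 ?leNa.
apply: eq_bigr => a _; case: (i == a) => /=; last by rewrite big1.
by rewrite sum_ord_if_eq // => b leMb; rewrite f0 // leMb orbT.
Qed.

Lemma inner_size_bounded {R : nzSemiRingType} (P : {poly {poly R}}) :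
  exists M : nat, forall a : nat, leq (size P`_a) M.
Proof.
exists (\sum_(a < size P) size (P`_a)%R)%N => a.
case: (ltnP a (size P)) => [ltaP|lePa]; first by rewrite (bigD1 (Ordinal ltaP)) //= leq_addr.
by rewrite nth_default // size_poly0.
Qed.

Lemma polyP2 {R : nzSemiRingType} (P Q : {poly {poly R}}) :
  (forall i j, P`_i`_j = Q`_i`_j) -> P = Q.
Proof. by move=> eqPQ; apply/polyP => i; apply/polyP => j; exact: eqPQ. Qed.

Section Weyl.
Variable F : fieldType.
Local Notation W := (W F).
Local Notation TP := (TP F).
Local Notation th2 := (('X : {poly F})%:P : TP).
Implicit Types (P Q : W) (r s : TP).

Definition wtheta (r : TP) : W := r%:P%:P.

Lemma wcstE (c : F) : wcst c = wtheta c%:P%:P. Proof. by []. Qed.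
Lemma wth1E : wth1 = wtheta 'X. Proof. by []. Qed.
Lemma wth2E : wth2 = wtheta th2. Proof. by []. Qed.

Lemma coef_wtheta r i j :
  (wtheta r)`_i`_j = if (i == 0%N) && (j == 0%N) then r else 0.
Proof.
rewrite /wtheta coefC; case: (i == 0%N) => /=; last by rewrite coef0.
by rewrite coefC.
Qed.

Lemma coef_wmono a b (r : TP) i j :
  (wmono a b r)`_i`_j = if (i == a) && (j == b) then r else 0.
Proof.
rewrite /wmono coefMXn; case: ltngtP => [ltia|ltai|->].
- by rewrite coef0.
- by rewrite coefC subn_eq0 leqNgt ltai coef0.
rewrite subnn coefC eqxx /= coefXnM; case: ltngtP => [//|ltbj|->].
  by rewrite coefC subn_eq0 leqNgt ltbj.
by rewrite subnn coefC.
Qed.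

Lemma wmono0 a b : @wmono F a b 0 = 0.
Proof. by rewrite /wmono !(polyC0, mulr0, mul0r). Qed.

Lemma shiftT0 c d : @shiftT F c d 0 = 0.
Proof. by rewrite /shiftT map_poly0 comp_poly0. Qed.

Lemma shiftT_theta1 c (r : TP) : shiftT c 0 r = r \Po ('X + (c%:R)%:P).
Proof.
rewrite /shiftT mulr0n polyC0 addr0 map_poly_id // => q _.
exact: comp_polyXr.
Qed.

Lemma shiftT00 (r : TP) : shiftT 0 0 r = r.
Proof. by rewrite shiftT_theta1 mulr0n polyC0 addr0 comp_polyXr. Qed.

Lemma shiftT_polyC c (q : {poly F}) : shiftT c 0 q%:P = q%:P.
Proof. by rewrite shiftT_theta1 comp_polyC. Qed.

Lemma wmul_bounded {P Q : W} {N M N' M' : nat} :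
  (size P <= N)%N -> (forall a, leq (size P`_a) M) ->
  (size Q <= N')%N -> (forall c, leq (size Q`_c) M') ->
  P *w Q = \sum_(a < N) \sum_(b < M) \sum_(c < N') \sum_(d < M')
     wmono (a + c) (b + d) (shiftT c d P`_a`_b * Q`_c`_d).
Proof.
move=> sPN sPM sQN sQM; rewrite /wmul.
apply: (eq_sum_ord_widen sPN) => /= [a|a leNa]; last first.
  rewrite big1 // => b _; rewrite big1 // => c _; rewrite big1 // => d _.
  by rewrite (nth_default _ leNa) coef0 shiftT0 mul0r wmono0.
apply: (eq_sum_ord_widen (sPM a)) => /= [b|b leMb]; last first.
  rewrite big1 // => c _; rewrite big1 // => d _.
  by rewrite (nth_default _ leMb) shiftT0 mul0r wmono0.
apply: (eq_sum_ord_widen sQN) => /= [c|c leNc]; last first.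
  by rewrite big1 // => d _; rewrite (nth_default _ leNc) coef0 mulr0 wmono0.
apply: (eq_sum_ord_widen (sQM c)) => //= d leMd.
by rewrite (nth_default _ leMd) mulr0 wmono0.
Qed.

Lemma coef_wmul {P Q : W} {N M N' M' i j : nat} :
  (size P <= N)%N -> (forall a, leq (size P`_a) M) ->
  (size Q <= N')%N -> (forall c, leq (size Q`_c) M') ->
  (P *w Q)`_i`_j = \sum_(a < N) \sum_(b < M) \sum_(c < N') \sum_(d < M')
    (if (i == (a + c)%N) && (j == (b + d)%N)
     then shiftT c d P`_a`_b * Q`_c`_d else 0).
Proof.
move=> sPN sPM sQN sQM; rewrite (wmul_bounded sPN sPM sQN sQM).
do 4![rewrite !coef_sum; apply: eq_bigr => ? _]; exact: coef_wmono.
Qed.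

Lemma wmul0r (Q : W) : 0 *w Q = 0.
Proof. by rewrite /wmul size_poly0 big_ord0. Qed.

Lemma wmulr0 (P : W) : P *w 0 = 0.
Proof. by rewrite /wmul big1 // => a _; rewrite big1 // => b _; rewrite size_poly0 big_ord0. Qed.

Lemma wmulDr (P Q1 Q2 : W) : P *w (Q1 + Q2) = P *w Q1 + P *w Q2.
Proof.
have [M sPM] := inner_size_bounded P.
have [M1 sQM1] := inner_size_bounded Q1; have [M2 sQM2] := inner_size_bounded Q2.
pose N' := maxn (size Q1) (size Q2); pose M' := maxn M1 M2.
have sQ1 : (size Q1 <= N')%N := leq_maxl _ _.
have sQ2 : (size Q2 <= N')%N := leq_maxr _ _.
have sQ1' c : leq (size Q1`_c) M' := leq_trans (sQM1 c) (leq_maxl _ _).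
have sQ2' c : leq (size Q2`_c) M' := leq_trans (sQM2 c) (leq_maxr _ _).
have sQ12 : (size (Q1 + Q2)%R <= N')%N := size_polyD _ _.
have sQ12' c : leq (size (Q1 + Q2)`_c) M'.
  by rewrite coefD (leq_trans (size_polyD _ _)) // geq_max sQ1' sQ2'.
apply: polyP2 => i j; rewrite !coefD.
rewrite (coef_wmul (leqnn _) sPM sQ12 sQ12') (coef_wmul (leqnn _) sPM sQ1 sQ1').
rewrite (coef_wmul (leqnn _) sPM sQ2 sQ2').
do 4![rewrite -big_split; apply: eq_bigr => ? _]; rewrite /= !coefD mulrDr.
by case: ifP; rewrite ?addr0.
Qed.

Lemma wmulNr (P Q : W) : P *w (- Q) = - (P *w Q).
Proof. by apply/eqP; rewrite -addr_eq0 -wmulDr addNr wmulr0. Qed.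

Lemma wmul_wthetar (P : W) s i j : (P *w wtheta s)`_i`_j = P`_i`_j * s.
Proof.
have [M sPM] := inner_size_bounded P.
have sT : (size (wtheta s) <= 1)%N := size_polyC_leq1 _.
have sT' c : leq (size (wtheta s)`_c) 1.
  by rewrite coefC; case: eqP; rewrite ?size_polyC_leq1 ?size_poly0.
rewrite (coef_wmul (leqnn _) sPM sT sT').
transitivity (\sum_(a < size P) \sum_(b < M)
    (if (i == a) && (j == b) then P`_a`_b * s else 0)).
  apply: eq_bigr => a _; apply: eq_bigr => b _.
  by rewrite !big_ord1 coef_wtheta /= !addn0 shiftT00.
apply: (sum_ord_if_eq2 (fun a b => P`_a`_b * s) i j) => a b /orP[leNa|leMb].
  by rewrite (nth_default _ leNa) coef0 mul0r.
by rewrite (nth_default _ (leq_trans (sPM a) leMb)) mul0r.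
Qed.

Lemma wmul_wthetal (P : W) r i j : (wtheta r *w P)`_i`_j = shiftT i j r * P`_i`_j.
Proof.
have [M sPM] := inner_size_bounded P.
have sT : (size (wtheta r) <= 1)%N := size_polyC_leq1 _.
have sT' c : leq (size (wtheta r)`_c) 1.
  by rewrite coefC; case: eqP; rewrite ?size_polyC_leq1 ?size_poly0.
rewrite (coef_wmul sT sT' (leqnn _) sPM) !big_ord1.
transitivity (\sum_(c < size P) \sum_(d < M)
    (if (i == c) && (j == d) then shiftT c d r * P`_c`_d else 0)).
  by apply: eq_bigr => c _; apply: eq_bigr => d _; rewrite coef_wtheta /= !add0n.
apply: (sum_ord_if_eq2 (fun c d => shiftT c d r * P`_c`_d) i j) => c d /orP[leNc|leMd].
  by rewrite (nth_default _ leNc) coef0 mulr0.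
by rewrite (nth_default _ (leq_trans (sPM c) leMd)) mulr0.
Qed.

Lemma wthetaM r s : wtheta r *w wtheta s = wtheta (r * s).
Proof.
apply: polyP2 => i j; rewrite wmul_wthetar !coef_wtheta.
by case: ifP; rewrite ?mul0r.
Qed.

Definition restrT : TP -> TP := map_poly (polyC \o horner_eval (0 : F)).
HB.instance Definition _ := GRing.RMorphism.on restrT.

Definition restr (P : W) : {poly {poly F}} :=
  map_poly (fun q : {poly TP} => map_poly (horner_eval (0 : F)) q`_0) P.

Definition restrW (P : W) : W := emb (restr P).

Lemma coef_emb (A : {poly {poly F}}) i j :
  (emb A)`_i`_j = if j == 0%N then map_poly polyC A`_i else 0.
Proof. by rewrite /emb coef_map_id0 ?map_poly0 ?polyC0 // coefC. Qed.

Lemma coef_restrW P i j : (restrW P)`_i`_j = if j == 0%N then restrT P`_i`_0 else 0.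
Proof.
rewrite /restrW coef_emb /restr coef_map_id0 ?coef0 ?map_poly0 //.
by rewrite /restrT map_poly_comp.
Qed.

Lemma restrWD P Q : restrW (P + Q) = restrW P + restrW Q.
Proof.
apply: polyP2 => i j; rewrite !(coefD, coef_restrW).
by case: ifP; rewrite ?addr0 // rmorphD.
Qed.

Lemma restrWN P : restrW (- P) = - restrW P.
Proof.
apply: polyP2 => i j; rewrite !(coefN, coef_restrW).
by case: ifP; rewrite ?oppr0 // rmorphN.
Qed.

Lemma restrWB P Q : restrW (P - Q) = restrW P - restrW Q.
Proof. by rewrite restrWD restrWN. Qed.

Lemma restrW_emb A : restrW (emb A) = emb A.
Proof.
apply: polyP2 => i j; rewrite coef_restrW !coef_emb eqxx; case: ifP => // _.
by rewrite /restrT -map_poly_comp; apply: eq_map_poly => c /=; rewrite /horner_eval hornerC.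
Qed.

Lemma restrW_wtheta r : restrW (wtheta r) = wtheta (restrT r).
Proof.
apply: polyP2 => i j; rewrite coef_restrW !coef_wtheta eqxx andbT.
by case: (j == 0%N); rewrite ?andbF ?andbT //; case: ifP; rewrite // rmorph0.
Qed.

Lemma restrT_theta1 : restrT 'X = 'X.
Proof. by rewrite /restrT map_polyX. Qed.

Lemma restrT_const (c : F) : restrT c%:P%:P = c%:P%:P.
Proof. by rewrite /restrT map_polyC /= /horner_eval hornerC. Qed.

Lemma restrT_theta2 : restrT th2 = 0.
Proof. by rewrite /restrT map_polyC /= /horner_eval hornerX polyC0. Qed.

Lemma restrT_mul_theta2 r : restrT (r * th2) = 0.
Proof. by rewrite rmorphM /= restrT_theta2 mulr0. Qed.

Lemma restrT_shiftM c (p q : TP) :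
  restrT (shiftT c 0 p * q) = shiftT c 0 (restrT p) * restrT q.
Proof.
by rewrite !shiftT_theta1 /restrT rmorphM /= map_comp_poly map_polyXaddC rmorph_nat.
Qed.

Lemma size_restrW P : (size (restrW P) <= size P)%N.
Proof.
apply/leq_sizeP => k leSk; apply/polyP => j.
by rewrite coef_restrW coef0 (nth_default _ leSk) coef0 rmorph0 if_same.
Qed.

Lemma size_restrW_coef P a : leq (size (restrW P)`_a) 1.
Proof.
by apply/leq_sizeP => k lt0k; rewrite coef_restrW; case: eqP => // k0; rewrite k0 in lt0k.
Qed.

(* Termwise comparison: a product term contributes to the z2-free part only when
   both factors are z2-free, and then [restrT_shiftM] applies. *)
Lemma restrWM P Q : restrW (P *w Q) = restrW P *w restrW Q.
Proof.
have [M sPM] := inner_size_bounded P; have [M' sQM] := inner_size_bounded Q.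
have sPM1 a : leq (size P`_a) M.+1 := leq_trans (sPM a) (leqnSn M).
have sQM1 c : leq (size Q`_c) M'.+1 := leq_trans (sQM c) (leqnSn M').
have sRP a : leq (size (restrW P)`_a) M.+1 := leq_trans (size_restrW_coef P a) (ltn0Sn M).
have sRQ c : leq (size (restrW Q)`_c) M'.+1 := leq_trans (size_restrW_coef Q c) (ltn0Sn M').
apply: polyP2 => i j; rewrite coef_restrW (coef_wmul (leqnn _) sPM1 (leqnn _) sQM1).
rewrite (coef_wmul (size_restrW P) sRP (size_restrW Q) sRQ); case: eqP => [->|/eqP j0].
  rewrite raddf_sum; apply: eq_bigr => a _; rewrite raddf_sum; apply: eq_bigr => -[[|b] ltbM] _;
  rewrite raddf_sum; apply: eq_bigr => c _; rewrite raddf_sum; apply: eq_bigr => -[[|d] ltdM] _;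
  rewrite !coef_restrW /= ?addn0 ?addnS ?andbF ?rmorph0 //.
  by case: ifP; rewrite ?restrT_shiftM ?rmorph0.
symmetry; rewrite big1 // => a _; rewrite big1 // => -[[|b] ltbM] _;
rewrite big1 // => c _; rewrite big1 // => -[[|d] ltdM] _;
rewrite !coef_restrW /= ?shiftT0 ?mul0r ?mulr0 ?if_same //.
by rewrite (negbTE j0) andbF.
Qed.

Lemma restrW_wth1 : restrW wth1 = wth1.
Proof. by rewrite wth1E restrW_wtheta restrT_theta1. Qed.

Lemma restrW_wcst c : restrW (wcst c) = wcst c.
Proof. by rewrite wcstE restrW_wtheta restrT_const. Qed.

Lemma restrW_wth2 : restrW wth2 = 0.
Proof. by rewrite wth2E restrW_wtheta restrT_theta2 /wtheta !polyC0. Qed.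

Lemma restrW_wz1 : restrW wz1 = wz1.
Proof.
apply: polyP2 => i j; rewrite coef_restrW coefX !coefMn !coef1.
by case: (eqVneq j 0%N); rewrite ?rmorphMn ?rmorph1 ?mul0rn.
Qed.

Lemma restrW_wz2 : restrW wz2 = 0.
Proof.
apply: polyP2 => i j; rewrite coef_restrW coef0 coefC.
by case: (i == 0%N); rewrite ?coefX ?coef0 ?rmorph0 ?if_same.
Qed.

Lemma restrW_idD {P Q} : restrW P = P -> restrW Q = Q -> restrW (P + Q) = P + Q.
Proof. by move=> eP eQ; rewrite restrWD eP eQ. Qed.

Lemma restrW_idB {P Q} : restrW P = P -> restrW Q = Q -> restrW (P - Q) = P - Q.
Proof. by move=> eP eQ; rewrite restrWB eP eQ. Qed.

Lemma restrW_idM {P Q} : restrW P = P -> restrW Q = Q -> restrW (P *w Q) = P *w Q.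
Proof. by move=> eP eQ; rewrite restrWM eP eQ. Qed.

(* Rewriting inside terms built from the concrete generators is very slow:
   failed matches make unification unfold their polynomial representations.
   Hence [restrW_Lred] is proved as a term, and [restrW_relation] and
   [restr_witness] are stated for abstract elements of W. *)
Lemma restrW_Lred (a0 a1 a2 : F) : restrW (Lred a0 a1 a2) = Lred a0 a1 a2.
Proof.
have restrW_th1D c : restrW (wth1 + wcst c) = wth1 + wcst c.
  exact: restrW_idD restrW_wth1 (restrW_wcst c).
exact: restrW_idB (restrW_idM restrW_wth1 restrW_wth1)
  (restrW_idM (restrW_idM (restrW_idM (restrW_wcst a0) restrW_wz1) (restrW_th1D a1))
     (restrW_th1D a2)).
Qed.

Lemma L1_split n (a0 a1 a2 : F) :
  L1 n a0 a1 a2 = Lred a0 a1 a2 - wtheta ((n%:R : F)%:P%:P * 'X * th2).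
Proof.
have <- : wcst n%:R *w wth1 *w wth2 = wtheta ((n%:R : F)%:P%:P * 'X * th2).
  by rewrite wcstE wth1E wth2E !wthetaM.
by rewrite /L1 -addrA addrC.
Qed.

Lemma restrW_L1 n (a0 a1 a2 : F) : restrW (L1 n a0 a1 a2) = Lred a0 a1 a2.
Proof.
rewrite L1_split restrWB restrW_Lred restrW_wtheta restrT_mul_theta2.
by rewrite /wtheta !polyC0 subr0.
Qed.

Lemma restrW_wmul0l {P} Q : restrW P = 0 -> restrW (P *w Q) = 0.
Proof. by move=> P0; rewrite restrWM P0 wmul0r. Qed.

Lemma restrW_wmul0r P {Q} : restrW Q = 0 -> restrW (P *w Q) = 0.
Proof. by move=> Q0; rewrite restrWM Q0 wmulr0. Qed.

Lemma restrW_L2 n : (0 < n)%N -> restrW (L2 F n) = 0.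
Proof.
case: n => // n _; rewrite /L2 restrWB.
rewrite (restrW_wmul0l _ restrW_wth2) (restrW_wmul0l _ (restrW_wmul0r _ restrW_wz2)).
exact: subrr.
Qed.

Lemma wth2_wmul_emb (A : {poly {poly F}}) r :
  wth2 *w (emb A *w wtheta r) = emb A *w wtheta (r * th2).
Proof.
apply: polyP2 => i j; rewrite wth2E wmul_wthetal !wmul_wthetar coef_emb.
by case: eqP => [->|_]; rewrite ?mul0r ?mulr0 // shiftT_polyC mulrCA (mulrC th2).
Qed.

Lemma restrW_relation {A : {poly {poly F}}} {B1 B2 P1 P2 X Y : W} :
  emb A + wz2 *w B1 + wth2 *w B2 = P1 *w X + P2 *w Y -> restrW Y = 0 ->
  emb A = restrW P1 *w restrW X.
Proof.
move=> eqA Y0; have := congr1 restrW eqA.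
rewrite !restrWD !restrWM restrW_emb restrW_wz2 restrW_wth2 Y0.
by rewrite !wmul0r wmulr0 !addr0.
Qed.

Lemma in_restr_idealL n (a0 a1 a2 : F) (A : {poly {poly F}}) : (0 < n)%N ->
  in_restr n a0 a1 a2 A -> in_idealL a0 a1 a2 A.
Proof.
move=> n_gt0 [B1 [B2 [P1 [P2 eqA]]]]; exists (restr P1).
by rewrite (restrW_relation eqA (restrW_L2 _ n_gt0)) restrW_L1.
Qed.

Lemma restr_witness {A : {poly {poly F}}} {Q Lr R B X Y z t : W} :
  emb A = Q *w Lr -> X = Lr - R -> t *w B = Q *w R ->
  emb A + z *w 0 + t *w - B = Q *w X + 0 *w Y.
Proof.
move=> eA -> tB.
by rewrite (wmulr0 z) (wmul0r Y) !addr0 wmulNr tB wmulDr wmulNr eA.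
Qed.

Lemma in_idealL_restr n (a0 a1 a2 : F) (A : {poly {poly F}}) :
  in_idealL a0 a1 a2 A -> in_restr n a0 a1 a2 A.
Proof.
case=> Q eA; exists 0, (- (emb Q *w wtheta ((n%:R : F)%:P%:P * 'X))), (emb Q), 0.
exact: restr_witness eA (L1_split _ _ _ _) (wth2_wmul_emb _ _).
Qed.

End Weyl.

Theorem proposition1 (F : numClosedFieldType) (n : nat) (a0 a1 a2 : F)
  (hn : (1 <= n)%N) (ha0 : a0 != 0) :
  forall A : {poly {poly F}}, in_restr n a0 a1 a2 A <-> in_idealL a0 a1 a2 A.
Proof.
by move=> A; split; [exact: in_restr_idealL | exact: in_idealL_restr].
Qed.
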